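(* Let $P=(Q,I,M,\Delta)$ be a broadcast protocol and $S$ the set returned by the saturation algorithm on $P$. Then $S$ is exactly the set of states $q$ for which there exists a lossy execution covering $\{q\}$. In particular, for every $F\subseteq Q$, there exists a lossy execution covering $F$ if and only if $F\cap S\neq\emptyset$.
   Context: A broadcast protocol is a tuple $P=(Q,I,M,\Delta)$ where $Q$ is a finite set of states, $I\subseteq Q$ initial states, $M$ a finite message alphabet and $\Delta\subseteq Q\times\{!!m,\ ??m \mid m\in M\}\times Q$ ($!!m$ = broadcast, $??m$ = reception). Protocols are complete for receptions: for every $q$, $m$ there is $q'$ with $(q,??m,q')\in\Delta$. A configuration is a finite undirected graph $\gamma=(V,E,L)$, $E$ symmetric irreflexive, $L:V\to Q$; $L(\gamma)=L(V)$; $\gamma$ is initial if $L(V)\subseteq I$. A lossy step goes from $\gamma=(V,E,L)$ to $\gamma'=(V,E,L')$ (same nodes and edges) if there exist a node $v$ and $m\in M$ with $(L(v),!!m,L'(v))\in\Delta$ and either (a) $L'(v')=L(v')$ for all $v'\neq v$ (the broadcast is lost), or (b) for every $v'\neq v$: if $v'$ is a neighbour of $v$ then $(L(v'),??m,L'(v'))\in\Delta$, otherwise $L'(v')=L(v')$ (successful broadcast). A lossy execution is a sequence $\gamma_0,\dots,\gamma_r$ with $\gamma_0$ initial and consecutive lossy steps; it covers $F$ if $L(\gamma_r)\cap F\neq\emptyset$. The saturation algorithm: start with $S:=I$, $c:=|I|$; repeat: if there is $(q_1,!!m,q_2)\in\Delta$ with $q_1\in S$, $q_2\notin S$, add $q_2$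 to $S$ and $c:=c+1$; else if there are $(q_1,!!m,q_2),(q_1',??m,q_2')\in\Delta$ with $q_1,q_2,q_1'\in S$, $q_2'\notin S$, add $q_2'$ and $c:=c+2$; else stop and return $S$. *)

From mathcomp Require Import all_boot.
Set Implicit Arguments. Unset Strict Implicit. Unset Printing Implicit Defensive.

Inductive act (M : Type) := Bcast of M | Recv of M.
Arguments Bcast {M} _.
Arguments Recv {M} _.

Section Broadcast.
Variables (Q M : finType).
Variable Delta : Q -> act M -> Q -> bool.

Definition complete_for_receptions : Prop :=
  forall (q : Q) (m : M), exists q', Delta q (Recv m) q'.

(* Configurations over a fixed graph (V, E): labelings L : V -> Q.
   Lossy steps preserve nodes and edges, so an execution is a sequence of
   labelings over one fixed graph. *)
Definition lossy_step (V : finType) (E : rel V) (L L' : V -> Q) : Prop :=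
  exists (v : V) (m : M),
    Delta (L v) (Bcast m) (L' v) /\
    ((forall v', v' != v -> L' v' = L v') \/
     (forall v', v' != v ->
        if E v v' then Delta (L v') (Recv m) (L' v') else L' v' == L v')).

Inductive lossy_reach (V : finType) (E : rel V) : (V -> Q) -> (V -> Q) -> Prop :=
| lr_refl L : lossy_reach E L L
| lr_step L L' L'' : lossy_step E L L' -> lossy_reach E L' L'' -> lossy_reach E L L''.

Definition lossy_coverable (I : {set Q}) (F : {set Q}) : Prop :=
  exists (V : finType) (E : rel V) (L0 Lr : V -> Q),
    symmetric E /\ irreflexive E /\
    (forall v, L0 v \in I) /\
    lossy_reach E L0 Lr /\
    (exists v, Lr v \in F).

Definition sat_rule1 (S : {set Q}) (q2 : Q) : Prop :=
  exists (q1 : Q) (m : M), [/\ Delta q1 (Bcast m) q2, q1 \in S & q2 \notin S].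

Definition sat_rule2 (S : {set Q}) (q2' : Q) : Prop :=
  exists (q1 q2 q1' : Q) (m : M),
    Delta q1 (Bcast m) q2 /\ Delta q1' (Recv m) q2' /\
    q1 \in S /\ q2 \in S /\ q1' \in S /\ q2' \notin S.

Definition sat_step (s s' : {set Q} * nat) : Prop :=
  (exists q2, sat_rule1 s.1 q2 /\ s' = (q2 |: s.1, s.2 + 1)) \/
  ((forall q2, ~ sat_rule1 s.1 q2) /\
   exists q2', sat_rule2 s.1 q2' /\ s' = (q2' |: s.1, s.2 + 2)).

Inductive sat_reach : {set Q} * nat -> {set Q} * nat -> Prop :=
| sr_refl s : sat_reach s s
| sr_step s s' s'' : sat_step s s' -> sat_reach s' s'' -> sat_reach s s''.

Definition saturation_returns (I S : {set Q}) : Prop :=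
  exists c : nat,
    sat_reach (I, #|I|) (S, c) /\ (forall s', ~ sat_step (S, c) s').

End Broadcast.

(** Every state added by the saturation algorithm is covered, by induction
   along the run.  For the first rule, let the covering node broadcast and
   lose the message.  For the second rule, take disjoint copies of executions
   covering [q1] and [q1'], join the two covering nodes by an edge, replay
   both executions and finally let the [q1]-node broadcast successfully.
   Replaying is faithful because in both executions the covering node only
   ever loses its broadcasts; the construction preserves this, since the
   node that broadcasts last is not the new covering node.
   Conversely, a set on which the algorithm stops is closed under broadcasts
   and under receptions of messages broadcast from within it, so no lossy
   execution from [I] ever leaves it. *)

From mathcomp Require Import all_boot.
From Stdlib Require Import Relation_Operators Operators_Properties.

Set Implicit Arguments. Unset Strict Implicit. Unset Printing Implicit Defensive.

Lemma clos_rt_map (A B : Type) (R : A -> A -> Prop) (R' : B -> B -> Prop)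
    (f : A -> B) :
  (forall x y, R x y -> R' (f x) (f y)) ->
  forall x y, clos_refl_trans _ R x y -> clos_refl_trans _ R' (f x) (f y).
Proof.
move=> fR x y; elim=> [u v uv | u | u v w _ IHuv _ IHvw].
- exact/rt_step/fR.
- exact: rt_refl.
- exact: rt_trans IHuv IHvw.
Qed.

Section Saturation.
Variables (Q M : finType) (Delta : Q -> act M -> Q -> bool).

Definition bcast_closed (S : {set Q}) : Prop :=
  forall q1 m q2, q1 \in S -> Delta q1 (Bcast m) q2 -> q2 \in S.

Definition recv_closed (S : {set Q}) : Prop :=
  forall q1 q2 q1' q2' m, q1 \in S -> q2 \in S -> q1' \in S ->
    Delta q1 (Bcast m) q2 -> Delta q1' (Recv m) q2' -> q2' \in S.

Lemma sat_reach_subset s s' : sat_reach Delta s s' -> s.1 \subset s'.1.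
Proof.
elim=> // s1 s2 s3 step12 _; apply: subset_trans.
by case: step12 => [[q [_ ->]] | [_ [q [_ ->]]]]; apply: subsetUr.
Qed.

Section Stuck.
Variables (S : {set Q}) (c : nat).
Hypothesis stuck : forall s', ~ sat_step Delta (S, c) s'.

Lemma sat_stuck_no_rule1 q : ~ sat_rule1 Delta S q.
Proof. by move=> rule1; apply: (@stuck (q |: S, c + 1)); left; exists q. Qed.

Lemma sat_stuck_bcast_closed : bcast_closed S.
Proof.
move=> q1 m q2 Sq1 bq; apply/negPn/negP => S'q2.
by apply: (@sat_stuck_no_rule1 q2); exists q1, m.
Qed.

Lemma sat_stuck_recv_closed : recv_closed S.
Proof.
move=> q1 q2 q1' q2' m Sq1 Sq2 Sq1' bq rq; apply/negPn/negP => S'q2'.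
apply: (@stuck (q2' |: S, c + 2)); right; split; first exact: sat_stuck_no_rule1.
by exists q2'; split=> //; exists q1, q2, q1', m.
Qed.

End Stuck.

Section Closed.
Variables (S : {set Q}) (V : finType) (E : rel V).
Hypotheses (S_bcast : bcast_closed S) (S_recv : recv_closed S).

Lemma lossy_step_closed L L' :
  lossy_step Delta E L L' -> (forall v, L v \in S) -> forall v, L' v \in S.
Proof.
move=> [u [m [bu upd]]] SL v; have SL'u : L' u \in S := S_bcast (SL u) bu.
have [-> // | vu] := eqVneq v u.
case: upd => upd; first by rewrite upd.
move: (upd v vu); case: ifP => _; last by move/eqP ->.
exact: S_recv (SL u) SL'u (SL v) bu.
Qed.

Lemma lossy_reach_closed L L' :
  lossy_reach Delta E L L' -> (forall v, L v \in S) -> forall v, L' v \in S.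
Proof. by elim=> // L1 L2 L3 /lossy_step_closed step _ IH /step. Qed.

End Closed.

Lemma lossy_coverable_meet (I S F : {set Q}) :
  I \subset S -> bcast_closed S -> recv_closed S ->
  lossy_coverable Delta I F -> F :&: S != set0.
Proof.
move=> IS S_bcast S_recv [V [E [L0 [L [_ [_ [IL0 [reach [v Fv]]]]]]]]].
apply/set0Pn; exists (L v); rewrite inE Fv /=.
by apply: lossy_reach_closed reach _ _ => // w; apply: (subsetP IS).
Qed.

(* The broadcasts of the root [r] are always lost, so [r] can later be given
   a new neighbour without affecting the execution. *)
Definition rooted_step (V : finType) (E : rel V) (r : V) (L L' : V -> Q) :=
  exists (u : V) (m : M), Delta (L u) (Bcast m) (L' u) /\
    ((forall v, v != u -> L' v = L v) \/
     (u != r /\ forall v, v != u ->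
        if E u v then Delta (L v) (Recv m) (L' v) else L' v == L v)).

Definition rooted_reach (V : finType) (E : rel V) (r : V) :=
  clos_refl_trans _ (rooted_step E r).

Lemma rooted_reach_snoc (V : finType) (E : rel V) r L L' L'' :
  rooted_reach E r L L' -> rooted_step E r L' L'' -> rooted_reach E r L L''.
Proof. by move=> reach step; apply: rt_trans reach _; apply: rt_step. Qed.

Definition root_coverable (I : {set Q}) (q : Q) : Prop :=
  exists (V : finType) (E : rel V) (L0 L : V -> Q) (r : V),
    [/\ symmetric E, irreflexive E, forall v, L0 v \in I,
        rooted_reach E r L0 L & L r = q].

Lemma rooted_step_lossy (V : finType) (E : rel V) r L L' :
  rooted_step E r L L' -> lossy_step Delta E L L'.
Proof.
move=> [u [m [bu upd]]]; exists u, m; split=> //.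
by case: upd => [lost | [_ sent]]; [left | right].
Qed.

Lemma rooted_reach_lossy (V : finType) (E : rel V) r L L' :
  rooted_reach E r L L' -> lossy_reach Delta E L L'.
Proof.
move=> reach; have lossy : clos_refl_trans _ (lossy_step Delta E) L L'.
  exact: (@clos_rt_map _ _ _ _ id (@rooted_step_lossy V E r) _ _ reach).
elim: (clos_rt_rt1n _ _ _ _ lossy) => [L1 | L1 L2 L3 step _ IH].
- exact: lr_refl.
- exact: lr_step IH.
Qed.

Lemma root_coverable_lossy (I F : {set Q}) q :
  q \in F -> root_coverable I q -> lossy_coverable Delta I F.
Proof.
move=> Fq [V [E [L0 [L [r [symE irrE IL0 reach Lr]]]]]].
exists V, E, L0, L; do 4 (split=> //); first exact: rooted_reach_lossy reach.
by exists r; rewrite Lr.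
Qed.

Lemma root_coverable_init (I : {set Q}) q : q \in I -> root_coverable I q.
Proof.
move=> Iq; exists (unit : finType), (fun _ _ => false), (fun _ => q),
  (fun _ => q), tt.
by split=> //; apply: rt_refl.
Qed.

Lemma root_coverable_bcast (I : {set Q}) q1 m q2 :
  root_coverable I q1 -> Delta q1 (Bcast m) q2 -> root_coverable I q2.
Proof.
move=> [V [E [L0 [L [r [symE irrE IL0 reach Lr]]]]]] bq.
exists V, E, L0, (fun v => if v == r then q2 else L v), r.
split=> //; last by rewrite eqxx.
apply: rooted_reach_snoc reach _; exists r, m; rewrite eqxx Lr.
by split=> //; left=> v /negbTE ->.
Qed.

Section Bridge.
Variables (VA VB : finType) (EA : rel VA) (EB : rel VB) (a : VA) (b : VB).

Definition bridge : rel (VA + VB) := fun x y =>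
  match x, y with
  | inl x, inl y => EA x y
  | inr x, inr y => EB x y
  | inl x, inr y => (x == a) && (y == b)
  | inr x, inl y => (x == b) && (y == a)
  end.

Definition sum_lab (LA : VA -> Q) (LB : VB -> Q) (x : VA + VB) : Q :=
  match x with inl x => LA x | inr y => LB y end.

Lemma bridge_sym : symmetric EA -> symmetric EB -> symmetric bridge.
Proof.
move=> symA symB [x|x] [y|y] /=; [exact: symA | exact: andbC | exact: andbC |
  exact: symB].
Qed.

Lemma bridge_irr : irreflexive EA -> irreflexive EB -> irreflexive bridge.
Proof. by move=> irrA irrB [x|x] /=. Qed.

Lemma rooted_step_inl LA LA' LB :
  rooted_step EA a LA LA' ->
  rooted_step bridge (inr b) (sum_lab LA LB) (sum_lab LA' LB).
Proof.
move=> [u [m [bu upd]]]; exists (inl u), m; split=> //.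
case: upd => [lost | [ua sent]].
  by left=> [[w|w]] //= wu; apply: lost; apply: contra wu => /eqP ->.
right; split=> // -[w|w] wu /=; last by rewrite (negbTE ua) /= eqxx.
by apply: sent; apply: contra wu => /eqP ->.
Qed.

Lemma rooted_step_inr LA LB LB' :
  rooted_step EB b LB LB' ->
  rooted_step bridge (inr b) (sum_lab LA LB) (sum_lab LA LB').
Proof.
move=> [u [m [bu upd]]]; exists (inr u), m; split=> //.
case: upd => [lost | [ub sent]].
  by left=> [[w|w]] //= wu; apply: lost; apply: contra wu => /eqP ->.
right; split=> [|[w|w] wu /=]; first by apply: contra ub => /eqP [->].
  by rewrite (negbTE ub) /= eqxx.
by apply: sent; apply: contra wu => /eqP ->.
Qed.

Lemma rooted_reach_bridge LA LA' LB LB' :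
  rooted_reach EA a LA LA' -> rooted_reach EB b LB LB' ->
  rooted_reach bridge (inr b) (sum_lab LA LB) (sum_lab LA' LB').
Proof.
move=> reachA reachB; apply: rt_trans.
  exact: (@clos_rt_map _ _ _ _ (sum_lab ^~ LB)
           (fun LA LA' => @rooted_step_inl LA LA' LB) _ _ reachA).
exact: (@clos_rt_map _ _ _ _ (sum_lab LA') (@rooted_step_inr LA') _ _ reachB).
Qed.

End Bridge.

Hypothesis Delta_complete : complete_for_receptions Delta.

Definition recv_target (q : Q) (m : M) : Q :=
  odflt q [pick q' | Delta q (Recv m) q'].

Lemma recv_targetP q m : Delta q (Recv m) (recv_target q m).
Proof.
rewrite /recv_target; case: pickP => [// | none].
by have [q' rq] := Delta_complete q m; rewrite none in rq.
Qed.

Definition bcast_lab (V : finType) (E : rel V) (L : V -> Q) u m q : V -> Q :=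
  fun v => if v == u then q else if E u v then recv_target (L v) m else L v.

Lemma rooted_step_bridge_bcast (VA VB : finType) (EA : rel VA) (EB : rel VB)
    a b (LA : VA -> Q) (LB : VB -> Q) m q2 q2' :
  Delta (LA a) (Bcast m) q2 -> Delta (LB b) (Recv m) q2' ->
  rooted_step (bridge EA EB a b) (inr b) (sum_lab LA LB)
    (sum_lab (bcast_lab EA LA a m q2) (fun y => if y == b then q2' else LB y)).
Proof.
move=> ba rb; exists (inl a), m; rewrite /= /bcast_lab eqxx; split=> //; right.
split=> // -[w|w] wa /=.
  have /negbTE-> : w != a by apply: contra wa => /eqP ->.
  by case: (EA a w) => /=; [apply: recv_targetP | rewrite eqxx].
by case: (eqVneq w b) => [-> | _].
Qed.

Lemma root_coverable_recv (I : {set Q}) q1 q2 q1' q2' m :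
  root_coverable I q1 -> root_coverable I q1' ->
  Delta q1 (Bcast m) q2 -> Delta q1' (Recv m) q2' -> root_coverable I q2'.
Proof.
move=> [VA [EA [LA0 [LA [a [symA irrA ILA0 reachA LAa]]]]]]
       [VB [EB [LB0 [LB [b [symB irrB ILB0 reachB LBb]]]]]] bq rq.
exists (VA + VB)%type, (bridge EA EB a b), (sum_lab LA0 LB0),
  (sum_lab (bcast_lab EA LA a m q2) (fun y => if y == b then q2' else LB y)),
  (inr b).
split; [exact: bridge_sym | exact: bridge_irr | by case | | ].
- apply: rooted_reach_snoc (rooted_reach_bridge reachA reachB) _.
  by apply: rooted_step_bridge_bcast; rewrite ?LAa ?LBb.
- by rewrite /= eqxx.
Qed.

Lemma sat_reach_root_coverable (I : {set Q}) s s' :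
  sat_reach Delta s s' -> (forall q, q \in s.1 -> root_coverable I q) ->
  forall q, q \in s'.1 -> root_coverable I q.
Proof.
elim=> // s1 s2 s3 step _ IH cov1; apply: IH => q.
case: step => [[q2 [[q1 [m [bq Sq1 _]]] ->]] |
               [_ [q2' [[q1 [q2 [q1' [m [bq [rq [Sq1 [Sq2 [Sq1' _]]]]]]]]] ->]]]];
  rewrite /= in_setU1 => /predU1P [-> | /cov1 //].
- exact: root_coverable_bcast (cov1 _ Sq1) bq.
- exact: root_coverable_recv (cov1 _ Sq1) (cov1 _ Sq1') bq rq.
Qed.

End Saturation.

Theorem lemma3p4 (Q M : finType) (I : {set Q}) (Delta : Q -> act M -> Q -> bool)
  (Hcomplete : complete_for_receptions Delta) (S : {set Q}) :
  saturation_returns Delta I S ->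
  (forall q : Q, q \in S <-> lossy_coverable Delta I [set q]) /\
  (forall F : {set Q}, lossy_coverable Delta I F <-> F :&: S != set0).
Proof.
move=> [c [reach stuck]].
have meet F : lossy_coverable Delta I F -> F :&: S != set0.
  apply: lossy_coverable_meet (sat_reach_subset reach) _ _.
    exact: sat_stuck_bcast_closed stuck.
  exact: sat_stuck_recv_closed stuck.
have cover : forall q, q \in S -> root_coverable Delta I q.
  by have := sat_reach_root_coverable Hcomplete reach; apply=> q /root_coverable_init.
split=> [q | F]; split.
- by move=> /cover; apply: root_coverable_lossy; rewrite inE.
- by move/meet/set0Pn => [x]; rewrite !inE => /andP [/eqP ->].
- exact: meet.
- by move/set0Pn => [x /setIP [Fx /cover]]; apply: root_coverable_lossy.
Qed.
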